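(* Let $X=\bigcup_{\alpha\in\Lambda}X_\alpha$, where each $X_\alpha$ is a closed locally Menger subspace of $X$ and the family $\{X_\alpha:\alpha\in\Lambda\}$ is locally finite in $X$. Then $X$ is locally Menger.
   Context: A space $X$ is Menger if for each sequence $(\mathcal{U}_n)$ of open covers of $X$ there is a sequence $(\mathcal{V}_n)$ with each $\mathcal{V}_n$ a finite subset of $\mathcal{U}_n$ and $\bigcup_{n}\bigcup\mathcal{V}_n=X$. A space $X$ is locally Menger if for each $x\in X$ there exist an open set $U$ and a Menger subspace $Y$ of $X$ with $x\in U\subseteq Y$. *)

From HB Require Import structures.
From mathcomp Require Import all_boot all_order all_algebra.
From mathcomp Require Import all_classical all_reals all_analysis.
Set Implicit Arguments. Unset Strict Implicit. Unset Printing Implicit Defensive.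
Local Open Scope classical_set_scope.

Definition open_cover_of {T : topologicalType} (Y : set T) (U : set (set T)) :=
  (forall W, U W -> open W) /\ Y `<=` \bigcup_(W in U) W.

(* Y (as a subspace of X) is Menger.  Open covers of the subspace Y are
   taken as families of open sets of X covering Y (relatively open sets are
   traces of open sets of X). *)
Definition Menger_set {T : topologicalType} (Y : set T) :=
  forall U : nat -> set (set T), (forall n, open_cover_of Y (U n)) ->
  exists V : nat -> set (set T),
    (forall n, V n `<=` U n /\ finite_set (V n)) /\
    Y `<=` \bigcup_n \bigcup_(W in V n) W.

Definition Menger_space (T : topologicalType) := Menger_set [set: T].

Definition locally_Menger_set {T : topologicalType} (Y : set T) :=
  forall x, Y x -> exists (W Z : set T),
    [/\ open W, Z `<=` Y, Menger_set Z, (W `&` Y) x & W `&` Y `<=` Z].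

Definition locally_Menger_space (T : topologicalType) :=
  locally_Menger_set [set: T].

Definition locally_finite_family {T : topologicalType} {I : Type}
  (F : I -> set T) :=
  forall x : T, exists N, nbhs x N /\ finite_set [set i | F i `&` N !=set0].

From HB Require Import structures.
From mathcomp Require Import all_boot all_order all_algebra.
From mathcomp Require Import all_classical all_reals all_analysis.
Local Open Scope classical_set_scope.

(* Every closed locally Menger X_a has an open W_a around x whose trace
   on X_a lies in a Menger set Z_a (if x is not in X_a, take W_a the complement
   of X_a and Z_a empty).  Only finitely many X_a meet a neighbourhood N of x,
   and the X_a cover the space, so N minus the finitely many complements, which
   is still a neighbourhood of x, lies in the finite union of the Z_a; a finite
   union of Menger sets is Menger. *)

Lemma filter_bigI_finite (T I : Type) (F : set_system T) (D : set I)
    (f : I -> set T) :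
  Filter F -> finite_set D -> (forall i, D i -> F (f i)) ->
  F (\bigcap_(i in D) f i).
Proof.
move=> FF /(@finite_fsetP (classicType I)) [E ->] FfE.
by apply: (@filter_bigI T (classicType I)) => // i /FfE.
Qed.

Lemma Menger_set0 (T : topologicalType) : Menger_set (@set0 T).
Proof.
move=> U _; exists (fun _ => set0); split => // n.
by split => //; exact: finite_set0.
Qed.

Lemma Menger_bigcup (T : topologicalType) (I : Type) (D : set I)
    (Z : I -> set T) :
  finite_set D -> (forall i, D i -> Menger_set (Z i)) ->
  Menger_set (\bigcup_(i in D) Z i).
Proof.
move=> Dfin ZM U U_cover.
have /choice [V HV] : forall i, exists V : nat -> set (set T), D i ->
    (forall n, V n `<=` U n /\ finite_set (V n)) /\
    Z i `<=` \bigcup_n \bigcup_(W in V n) W.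
  move=> i; have [Di|nDi] := pselect (D i); last by exists (fun _ => set0).
  have [V HV] := ZM i Di U (fun n => conj (U_cover n).1
    (subset_trans (bigcup_sup Di) (U_cover n).2)).
  by exists V.
exists (fun n => \bigcup_(i in D) V i n); split.
  move=> n; split.
    by move=> W [i Di /((HV i Di).1 n).1].
  by apply: bigcup_finite => // i Di; exact: ((HV i Di).1 n).2.
move=> y [i Di Ziy]; have [n _ [W VW Wy]] := (HV i Di).2 y Ziy.
by exists n => //; exists W => //; exists i.
Qed.

Lemma locally_Menger_spaceP (T : topologicalType) :
  (forall x : T, exists2 Z, Menger_set Z & nbhs x Z) ->
  locally_Menger_space T.
Proof.
move=> HZ x _; have [Z ZM Zx] := HZ x.
exists (interior Z), Z; split => //; first exact: open_interior.
by move=> y [/interior_subset].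
Qed.

Lemma closed_locally_Menger_trace {T : topologicalType} (x : T) {Y : set T} :
  closed Y -> locally_Menger_set Y ->
  exists WZ : set T * set T,
    [/\ open_nbhs x WZ.1, Menger_set WZ.2 & WZ.1 `&` Y `<=` WZ.2].
Proof.
move=> Ycl YLM; have [Yx|nYx] := pselect (Y x).
  have [W [Z [Wo _ ZM [Wx _] WZ]]] := YLM x Yx.
  by exists (W, Z).
exists (~` Y, set0); split => /=.
- by split; [exact: closed_openC |].
- exact: Menger_set0.
- by move=> y [].
Qed.

Theorem theorem4p5 (T : topologicalType) (Lambda : Type) (X_ : Lambda -> set T) :
  \bigcup_(a in [set: Lambda]) X_ a = [set: T] ->
  (forall a, closed (X_ a)) ->
  (forall a, locally_Menger_set (X_ a)) ->
  locally_finite_family X_ ->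
  locally_Menger_space T.
Proof.
move=> X_cover X_closed X_LM X_locfin; apply: locally_Menger_spaceP => x.
have [N [Nx Nfin]] := X_locfin x.
set D := [set a | X_ a `&` N !=set0].
have /choice [WZ HWZ] a := closed_locally_Menger_trace x (X_closed a) (X_LM a).
exists (\bigcup_(a in D) (WZ a).2).
  by apply: Menger_bigcup => // a _; have [] := HWZ a.
have WD_nbhs : nbhs x (N `&` \bigcap_(a in D) (WZ a).1).
  apply: filterI => //; apply: filter_bigI_finite => // a _.
  by apply: open_nbhs_nbhs; have [] := HWZ a.
apply: filterS WD_nbhs => y [Ny Wy].
have : [set: T] y by [].
rewrite -X_cover => -[a _ Xay].
have Da : D a by exists y.
exists a => //; have [_ _ WZa] := HWZ a.
exact/WZa/(conj (Wy a Da) Xay).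
Qed.
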